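(* Let $n\ge4$ and consider $Sp(2n,\mathbb{C})$ with the root data described in the context. There exist no weights $\mu_0,\lambda_0$ with $\mu_0+\lambda_0=\rho_{\mathrm{nc}}-\rho_{\mathrm c}$ satisfying simultaneously: (a) $(\mu_0,\alpha)\ge0$ and $(\lambda_0,\alpha)\ge0$ for all $\alpha\in\Delta_+^{\mathrm c}$; and (b) for every $\beta\in\Delta_+^{\mathrm{nc},1}$ there is $\alpha_\beta\in\Delta_+^{\mathrm c}$ with $(\mu_0-\beta,\alpha_\beta)<0$, and for every $\gamma\in\Delta_+^{\mathrm{nc},2}$ there is $\alpha_\gamma\in\Delta_+^{\mathrm c}$ with $(\lambda_0-\gamma,\alpha_\gamma)<0$.
   Context: For $Sp(2n,\mathbb{C})$ with compact Cartan subgroup $T\cong U(1)^n$ of $Sp(2n,\mathbb{R})$, weights are integral combinations $\sum_{i=1}^n a_ie_i^*$ ($a_i\in\mathbb Z$) with inner product $(e_i^*,e_j^* )=\delta_{ij}$. Consider the positive system (defining the non-classical period domain for weight $2n-1$ Hodge structures with all Hodge numbers $1$) $\Delta_+=\Delta_+^{\mathrm c}\cup\Delta_+^{\mathrm{nc},1}\cup\Delta_+^{\mathrm{nc},2}$ with $\Delta_+^{\mathrm c}=\{(-1)^{i-1}(e_i^*-e_j^* ):1\le i<j\le n\}$, $\Delta_+^{\mathrm{nc},1}=\{e_i^*+e_j^*:1\le i\le j\le n,\ i\text{ odd}\}$, $\Delta_+^{\mathrm{nc},2}=\{-e_i^*-e_j^*:1\le i\le j\le n,\ i\text{ even}\}$,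 and $\Delta_+^{\mathrm{nc}}=\{(-1)^{i-1}(e_i^*+e_j^* ):1\le i\le j\le n\}=\Delta_+^{\mathrm{nc},1}\cup\Delta_+^{\mathrm{nc},2}$. $\rho_{\mathrm c}$ and $\rho_{\mathrm{nc}}$ are half the sums of the roots in $\Delta_+^{\mathrm c}$ and $\Delta_+^{\mathrm{nc}}$. *)

From HB Require Import structures.
From mathcomp Require Import all_boot all_order all_algebra.
Set Implicit Arguments. Unset Strict Implicit. Unset Printing Implicit Defensive.
Import Order.TTheory GRing.Theory Num.Theory.
Local Open Scope ring_scope.

(* Weights of Sp(2n,C) live in the lattice sum_i Z e_i^star; we embed them in
   rational row vectors 'rV[rat]_n (coordinates w.r.t. e_1^star,...,e_n^star),
   since rho_c and rho_nc are half-sums. Indices are 0-based: the paper's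
   index i (1-based) is our i : 'I_n with value i-1, so (-1)^(i-1) becomes
   (-1)^(val i). *)

Definition ev (n : nat) (i : 'I_n) : 'rV[rat]_n := delta_mx 0 i.

Definition sgn (n : nat) (i : 'I_n) : rat := (-1) ^+ (val i).

Definition ip (n : nat) (a b : 'rV[rat]_n) : rat := \sum_(k < n) a 0 k * b 0 k.

Definition Dc (n : nat) : seq 'rV[rat]_n :=
  [seq sgn i *: (ev i - ev j) | i <- enum 'I_n, j <- [seq j <- enum 'I_n | (val i < val j)%N]].

(* Delta_+^{nc,1} = { e_i + e_j : i <= j, i odd (1-based) } *)
Definition Dnc1 (n : nat) : seq 'rV[rat]_n :=
  [seq ev i + ev j | i <- [seq i <- enum 'I_n | ~~ odd (val i)],
                     j <- [seq j <- enum 'I_n | (val i <= val j)%N]].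

(* Delta_+^{nc,2} = { -e_i - e_j : i <= j, i even (1-based) } *)
Definition Dnc2 (n : nat) : seq 'rV[rat]_n :=
  [seq - ev i - ev j | i <- [seq i <- enum 'I_n | odd (val i)],
                       j <- [seq j <- enum 'I_n | (val i <= val j)%N]].

Definition Dnc (n : nat) : seq 'rV[rat]_n :=
  [seq sgn i *: (ev i + ev j) | i <- enum 'I_n, j <- [seq j <- enum 'I_n | (val i <= val j)%N]].

Definition rho_c (n : nat) : 'rV[rat]_n := 2^-1 *: \sum_(a <- Dc n) a.
Definition rho_nc (n : nat) : 'rV[rat]_n := 2^-1 *: \sum_(a <- Dnc n) a.

Definition wt (n : nat) (a : 'I_n -> int) : 'rV[rat]_n := \row_k (a k)%:~R.

From HB Require Import structures.
From mathcomp Require Import all_boot all_order all_algebra.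
From mathcomp Require Import zify lra.
Import Order.TTheory GRing.Theory Num.Theory.
Local Open Scope ring_scope.

Set Implicit Arguments.
Unset Strict Implicit.

(* Call x dominant when (x, alpha) >= 0 for every alpha in Delta_+^c; with 0-based
   indices this says x_i >= x_j when i < j and i is even, x_i <= x_j when i is odd.
   Since rho_nc - rho_c is the indicator of the even indices, dominance of mu0 and of
   lam0 = rho_nc - rho_c - mu0 forces mu0 to be constant on the even and on the odd
   indices, the even value exceeding the odd one by 0 or 1 (mu0 is integral).
   If the gap is 1, mu0 - (e_P + e_Q) is still dominant for the last two even indices
   P < Q, against (b) for beta = e_P + e_Q; if the gap is 0, lam0 has gap 1 and
   lam0 + e_P + e_Q is dominant for the last two odd indices, against (b) for
   gamma = -e_P - e_Q.  Both pairs exist because n >= 4. *)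

Section Weights.
Variable n : nat.
Implicit Types (x y : 'rV[rat]_n) (i j k : 'I_n).

Lemma ipD x y z : ip x (y + z) = ip x y + ip x z.
Proof. by rewrite /ip -big_split; apply: eq_bigr => k _; rewrite mxE mulrDr. Qed.

Lemma ipN x y : ip x (- y) = - ip x y.
Proof. by rewrite /ip -sumrN; apply: eq_bigr => k _; rewrite mxE mulrN. Qed.

Lemma ipZ x c y : ip x (c *: y) = c * ip x y.
Proof. by rewrite /ip mulr_sumr; apply: eq_bigr => k _; rewrite mxE mulrCA. Qed.

Lemma ip_ev x i : ip x (ev i) = x 0 i.
Proof.
rewrite /ip (bigD1 i) //= big1 ?addr0 => [|k /negbTE ki]; rewrite mxE /=.
  by rewrite !eqxx mulr1.
by rewrite ki mulr0.
Qed.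

Lemma sgnE i : sgn i = if odd i then -1 else 1.
Proof. by rewrite /sgn -signr_odd; case: (odd i). Qed.

Lemma ip_compact_root x i j :
  ip x (sgn i *: (ev i - ev j)) = sgn i * (x 0 i - x 0 j).
Proof. by rewrite ipZ ipD ipN !ip_ev. Qed.

Lemma mem_Dc a :
  reflect (exists i j, (i < j)%N /\ a = sgn i *: (ev i - ev j)) (a \in Dc n).
Proof.
apply: (iffP allpairsPdep) => [[i [j [_ + ->]]]|[i [j [ij ->]]]].
  by rewrite mem_filter => /andP[ij _]; exists i, j.
exists i, j; split=> //; first exact: mem_enum.
by rewrite mem_filter ij mem_enum.
Qed.

Definition dominant x := forall a, a \in Dc n -> 0 <= ip x a.

Lemma dominantP x :
  dominant x <-> forall i j, (i < j)%N -> 0 <= sgn i * (x 0 i - x 0 j).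
Proof.
split=> [dx i j ij | dx a /mem_Dc[i [j [ij ->]]]].
  by rewrite -ip_compact_root; apply/dx/mem_Dc; exists i, j.
by rewrite ip_compact_root dx.
Qed.

Lemma sum_ev_coord (P : pred 'I_n) k : (\sum_(j | P j) ev j) 0 k = (P k)%:R.
Proof.
rewrite summxE big_mkcond (bigD1 k) //= big1 ?addr0 => [|j jk].
  by rewrite mxE !eqxx; case: (P k).
by rewrite mxE eq_sym (negbTE jk) andbF; case: (P j).
Qed.

Lemma alternating_sum (m : nat) : \sum_(i < m.+1) (-1) ^+ i = (~~ odd m)%:R :> rat.
Proof.
elim: m => [|m IH]; first by rewrite big_ord1.
by rewrite big_ord_recr /= IH -signr_odd /=; case: (odd m) => /=; lra.
Qed.

Definition even_row : 'rV[rat]_n := \row_k (~~ odd k)%:R.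

Lemma rho_nc_sub_rho_c : rho_nc n - rho_c n = even_row.
Proof.
have -> : rho_nc n - rho_c n = \sum_(i : 'I_n) \sum_(j : 'I_n | (i <= j)%N) sgn i *: ev j.
  rewrite /rho_nc /rho_c /Dnc /Dc !big_allpairs_dep -scalerBr -sumrB.
  apply: (canLR (scalerK _)) => //; rewrite scaler_sumr big_enum /=.
  apply: eq_bigr => i _; rewrite !big_filter !big_enum_cond /=.
  have -> : \sum_(j < n | (i < j)%N) sgn i *: (ev i - ev j)
            = \sum_(j < n | (i <= j)%N) sgn i *: (ev i - ev j).
    rewrite [RHS](bigD1 i) //= subrr scaler0 add0r.
    by apply: eq_bigl => j; rewrite ltn_neqAle andbC eq_sym.
  rewrite -sumrB scaler_sumr; apply: eq_bigr => j _.
  rewrite -scalerBr scalerA mulrC -scalerA; congr (_ *: _).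
  by rewrite opprB addrC addrA subrK scaler_nat mulr2n.
apply/rowP => k; rewrite mxE summxE.
rewrite -(alternating_sum k) (big_ord_widen n _ (ltn_ord k)) [RHS]big_mkcond /=.
apply: eq_bigr => i _; rewrite -scaler_sumr mxE sum_ev_coord /= ltnS.
by case: (i <= k)%N; rewrite ?mulr1 ?mulr0.
Qed.

Lemma dominant_complement_parity x :
    dominant x -> dominant (even_row - x) ->
  (forall i j, odd i = odd j -> x 0 i = x 0 j) /\
  (forall i j, ~~ odd i -> odd j -> 0 <= x 0 i - x 0 j <= 1).
Proof.
move=> /dominantP dx /dominantP dy.
have dij i j : (i < j)%N -> 0 <= sgn i * (x 0 i - x 0 j) /\
    0 <= sgn i * ((~~ odd i)%:R - (~~ odd j)%:R - (x 0 i - x 0 j)).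
  by move=> ij; have := dy _ _ ij; rewrite !mxE => dyij; split; [apply: dx | lra].
split=> [i j ij | i j ei oj].
  case: (ltngtP i j) => [lt_ij | lt_ji | /val_inj -> //].
    by have := dij _ _ lt_ij; rewrite sgnE -ij; case: (odd i) => /=; lra.
  by have := dij _ _ lt_ji; rewrite sgnE ij; case: (odd j) => /=; lra.
case: (ltngtP i j) => [lt_ij | lt_ji | /val_inj eq_ij]; last by rewrite eq_ij oj in ei.
  by have := dij _ _ lt_ij; rewrite sgnE (negbTE ei) oj /= => -[? ?]; apply/andP; lra.
by have := dij _ _ lt_ji; rewrite sgnE (negbTE ei) oj /= => -[? ?]; apply/andP; lra.
Qed.

Lemma dominant_complement_int (mu : 'I_n -> int) : (1 < n)%N ->
    dominant (wt mu) -> dominant (even_row - wt mu) ->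
  exists c, wt mu = const_mx c + even_row \/ even_row - wt mu = const_mx c + even_row.
Proof.
move=> n_gt1 dmu dlam; pose o0 := Ordinal (ltnW n_gt1); pose o1 := Ordinal n_gt1.
have [same mix] := dominant_complement_parity dmu dlam.
have muE k : wt mu 0 k = if odd k then wt mu 0 o1 else wt mu 0 o0.
  by case: ifP => ok; apply: same; rewrite ok.
have [d0|d1] : wt mu 0 o0 - wt mu 0 o1 = 0 \/ wt mu 0 o0 - wt mu 0 o1 = 1.
  have := mix o0 o1 isT isT; rewrite !mxE -intrB ler0z lerz1 => d01.
  have [->|->] : (mu o0 - mu o1 = 0 \/ mu o0 - mu o1 = 1)%R by lia.
    by left.
  by right.
- exists (- wt mu 0 o0); right; apply/rowP => k.
  by move: d0 (muE k); rewrite !mxE; case: (odd k) => /=; lra.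
- exists (wt mu 0 o1); left; apply/rowP => k.
  by move: d1 (muE k); rewrite !mxE; case: (odd k) => /=; lra.
Qed.

Lemma mem_Dnc1 i j : ~~ odd i -> (i <= j)%N -> ev i + ev j \in Dnc1 n.
Proof.
move=> ei ij; apply/allpairsPdep; exists i, j.
by split; rewrite // mem_filter ?ei ?ij mem_enum.
Qed.

Lemma mem_Dnc2 i j : odd i -> (i <= j)%N -> - ev i - ev j \in Dnc2 n.
Proof.
move=> oi ij; apply/allpairsPdep; exists i, j.
by split; rewrite // mem_filter ?oi ?ij mem_enum.
Qed.

Lemma exists_parity_pair (b : bool) : (4 <= n)%N ->
  exists P Q : 'I_n, [/\ (P + 2 = Q)%N, (n <= Q + 2)%N & odd Q = b].
Proof.
move=> n_ge4; pose q := if odd n.-1 == b then n.-1 else n.-2.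
have qn : (q < n)%N by rewrite /q; case: ifP; lia.
have pn : (q - 2 < n)%N by lia.
exists (Ordinal pn), (Ordinal qn); rewrite /= {pn qn}/q.
by case: (eqVneq (odd n.-1) b); case: b; split; lia.
Qed.

Section ParityPair.
Variables (P Q : 'I_n).
Hypothesis (PQ : (P + 2 = Q)%N).
Let t k := (k == P) || (k == Q).

Lemma ev_pair_coord k : (ev P + ev Q) 0 k = (t k)%:R.
Proof.
rewrite !mxE /= /t; case: (eqVneq k P) => [-> | _] /=; last by rewrite add0r.
suff /negbTE -> : P != Q by rewrite addr0.
by apply/eqP => /(congr1 val) /=; lia.
Qed.

Lemma pair_parity k : t k -> odd k = odd Q.
Proof. by case/orP => /eqP ->; rewrite // -PQ oddD addbF. Qed.

Hypothesis Q_last : (n <= Q + 2)%N.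

Lemma pair_upward i j : (i < j)%N -> odd i = odd j -> t i -> t j.
Proof.
move=> ij oij ti; have := pair_parity ti; rewrite oij => oj.
have := ltn_ord j; move: ti; rewrite /t -!(inj_eq val_inj) /=.
lia.
Qed.

Lemma dominant_add_odd_pair c : odd Q -> dominant (const_mx c + even_row + (ev P + ev Q)).
Proof.
move=> oQ; apply/dominantP => i j ij.
have xE k : (const_mx c + even_row + (ev P + ev Q)) 0 k = c + (~~ odd k)%:R + (t k)%:R.
  by rewrite -ev_pair_coord !mxE.
rewrite !xE sgnE.
move: (pair_parity (k := i)) (pair_parity (k := j)) (pair_upward ij); rewrite oQ.
by case: (t i) (t j) (odd i) (odd j) => [] [] [] [] /= pi pj up;
  first [lra | have := pi isT | have := pj isT | have := up erefl isT].
Qed.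

Lemma dominant_sub_even_pair c : ~~ odd Q -> dominant (const_mx c + even_row - (ev P + ev Q)).
Proof.
move=> /negbTE eQ; apply/dominantP => i j ij.
have xE k : (const_mx c + even_row - (ev P + ev Q)) 0 k = c + (~~ odd k)%:R - (t k)%:R.
  by rewrite -ev_pair_coord !mxE.
rewrite !xE sgnE.
move: (pair_parity (k := i)) (pair_parity (k := j)) (pair_upward ij); rewrite eQ.
by case: (t i) (t j) (odd i) (odd j) => [] [] [] [] /= pi pj up;
  first [lra | have := pi isT | have := pj isT | have := up erefl isT].
Qed.

End ParityPair.

End Weights.

Theorem proposition6p7 (n : nat) (hn : (4 <= n)%N) :
  ~ exists (mu0 lam0 : 'I_n -> int),
      [/\ wt mu0 + wt lam0 = rho_nc n - rho_c n,
          (forall a, a \in Dc n -> 0 <= ip (wt mu0) a /\ 0 <= ip (wt lam0) a),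
          (forall b, b \in Dnc1 n -> exists2 a, a \in Dc n & ip (wt mu0 - b) a < 0)
        & (forall g, g \in Dnc2 n -> exists2 a, a \in Dc n & ip (wt lam0 - g) a < 0)].
Proof.
case=> mu [lam [sum_eq dom mu_sep lam_sep]].
have lamE : wt lam = even_row n - wt mu by rewrite -rho_nc_sub_rho_c -sum_eq addrC addKr.
have dmu : dominant (wt mu) by move=> a /dom[].
have dlam : dominant (even_row n - wt mu) by rewrite -lamE => a /dom[].
have [c [muE | lamE']] := dominant_complement_int (ltnW (ltnW hn)) dmu dlam.
- have [P [Q [PQ Q_last /negbT eQ]]] := exists_parity_pair false hn.
  have [eP PleQ] : ~~ odd P /\ (P <= Q)%N by split; lia.
  have [a /(dominant_sub_even_pair PQ Q_last c eQ) dom_a] := mu_sep _ (mem_Dnc1 eP PleQ).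
  by rewrite muE ltNge dom_a.
- have [P [Q [PQ Q_last oQ]]] := exists_parity_pair true hn.
  have [oP PleQ] : odd P /\ (P <= Q)%N by split; lia.
  have [a /(dominant_add_odd_pair PQ Q_last c oQ) dom_a] := lam_sep _ (mem_Dnc2 oP PleQ).
  by rewrite lamE lamE' -opprD opprK ltNge dom_a.
Qed.
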